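(* Let $\Gamma$ be a finite connected regular graph with valency $k\ge 2$ and diameter $D\ge 3$. Then $\Gamma$ has an eigenvalue $\theta\neq k$ (of its adjacency matrix) satisfying $|\theta|>\sqrt{k/2}$.
   Context: Graphs are finite, undirected and simple; the eigenvalues of a graph are those of its adjacency matrix. *)

From HB Require Import structures.
From mathcomp Require Import all_boot all_order all_algebra.
From mathcomp Require Import reals.
Set Implicit Arguments. Unset Strict Implicit. Unset Printing Implicit Defensive.
Import Order.TTheory GRing.Theory Num.Theory.

Section Graph.
Variable n : nat.
Variable e : rel 'I_n.

Definition simple_graph : Prop := irreflexive e /\ symmetric e.

Definition walk_le (m : nat) (x y : 'I_n) : Prop :=
  exists p : seq 'I_n, [/\ path e x p, last x p = y & size p <= m].

Definition connected_graph : Prop := forall x y : 'I_n, connect e x y.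

Definition regular_graph (k : nat) : Prop :=
  forall x : 'I_n, #|[set y | e x y]| = k.

Definition has_diameter (D : nat) : Prop :=
  (forall x y : 'I_n, walk_le D x y) /\
  (exists x y : 'I_n, ~ walk_le D.-1 x y).

Definition adjmx (R : nzRingType) : 'M[R]_n := \matrix_(i, j) ((e i j)%:R)%R.
End Graph.

From HB Require Import structures.
From mathcomp Require Import all_boot all_order all_algebra.
From mathcomp Require Import reals complex.
Set Implicit Arguments.
Unset Strict Implicit.
Unset Printing Implicit Defensive.

Import Order.TTheory GRing.Theory Num.Theory Num.Def.
Local Open Scope ring_scope.
Local Open Scope sesquilinear_scope.

(* Take vertices x, y at distance D >= 3, so that they have no common
   neighbour, and v = e_x - e_y.  Then |v|^2 = 2 while |vA|^2 = 2k.  By the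
   maximum principle the eigenvectors of A for the eigenvalue k are constant,
   hence orthogonal to v.  Expanding v in an orthonormal eigenbasis of A, if
   every other eigenvalue satisfied theta^2 <= k/2 we would get
   |vA|^2 <= (k/2) |v|^2 = k < 2k. *)

Section Dotmx.
Variable C : numClosedFieldType.

Lemma dotmx_sum_norm n (w : 'rV[C]_n) : dotmx w w = \sum_i `|w 0 i| ^+ 2.
Proof. by rewrite dotmxE mxE; apply: eq_bigr => i _; rewrite !mxE normCK. Qed.

Lemma dotmx_mul_unitary m n (w : 'rV[C]_m) (U : 'M[C]_(m, n)) :
  U \is unitarymx -> dotmx (w *m U) (w *m U) = dotmx w w.
Proof. by move=> U_unitary; rewrite !dotmxE trmx_mul map_mxM mulmxA mulmxtVK. Qed.

Lemma dotmx_delta n (x : 'I_n) (u : 'rV[C]_n) : dotmx 'e_x u = conjC (u 0 x).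
Proof. by rewrite dotmxE -rowE !mxE. Qed.

Lemma dotmx_delta_diff n (x y : 'I_n) : x != y ->
  dotmx ('e_x - 'e_y) ('e_x - 'e_y) = 2 :> C.
Proof.
move=> xy; rewrite dotmx_sum_norm (bigD1 x) // (bigD1 y) 1?eq_sym //= big1.
  rewrite !mxE !eqxx (negbTE xy) eq_sym (negbTE xy) subr0 sub0r normrN.
  by rewrite normr1 expr1n addr0.
by move=> j /andP[jy jx]; rewrite !mxE (negbTE jx) (negbTE jy) subr0 normr0 expr0n.
Qed.

End Dotmx.

Section HermitianSpectral.
Variables (C : numClosedFieldType) (n : nat) (A : 'M[C]_n).
Hypothesis A_herm : A \is hermsymmx.
Local Notation P := (spectralmx A).
Local Notation d := (spectral_diag A).

Let P_unitary : P \is unitarymx := spectral_unitarymx A.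

Lemma hermitian_spectral_decomposition (v : 'rV[C]_n) :
  v *m A = v *m P^t* *m diag_mx d *m P.
Proof.
have /orthomx_spectralP A_eq := hermitian_normalmx A_herm.
by rewrite {1}A_eq invmx_unitary // !mulmxA.
Qed.

Lemma hermitian_spectral_eigenvector i : row i P *m A = d 0 i *: row i P.
Proof.
rewrite hermitian_spectral_decomposition rowE mulmxtVK //.
by rewrite -rowE row_diag_mx -scalemxAl -rowE.
Qed.

Lemma dotmx_spectral_row (v : 'rV[C]_n) i : dotmx v (row i P) = (v *m P^t*) 0 i.
Proof. by rewrite dotmxE !mxE; apply: eq_bigr => j _; rewrite !mxE. Qed.

Lemma dotmx_spectral (v : 'rV[C]_n) :
  dotmx v v = \sum_i `|(v *m P^t*) 0 i| ^+ 2.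
Proof.
by rewrite -dotmx_sum_norm -[in LHS](mulmxKtV v P_unitary) // dotmx_mul_unitary.
Qed.

Lemma dotmx_hermitian_spectral (v : 'rV[C]_n) :
  dotmx (v *m A) (v *m A) = \sum_i `|(v *m P^t*) 0 i| ^+ 2 * d 0 i ^+ 2.
Proof.
rewrite hermitian_spectral_decomposition dotmx_mul_unitary // dotmx_sum_norm.
apply: eq_bigr => i _; rewrite mul_mx_diag mxE normrM exprMn.
by rewrite [`|d 0 i| ^+ 2]real_normK // (mxOverP (hermitian_spectral_diag_real _)).
Qed.

(* With [c := v P^t*] the coordinates of [v] in the eigenbasis (rows of [P]):
   if no [i] has [b < d_i^2] and [c_i != 0], each term [|c_i|^2 d_i^2] of
   [|vA|^2] is at most [b |c_i|^2], and these add up to [b |v|^2]. *)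
Lemma hermitian_large_eigenvector (v : 'rV[C]_n) (b : C) : b \is Num.real ->
  b * dotmx v v < dotmx (v *m A) (v *m A) ->
  exists theta (u : 'rV[C]_n),
    [/\ theta \is Num.real, u *m A = theta *: u, b < theta ^+ 2 & dotmx v u != 0].
Proof.
move=> b_real; rewrite dotmx_spectral dotmx_hermitian_spectral mulr_sumr.
have d_real i : d 0 i \is Num.real.
  exact: (mxOverP (hermitian_spectral_diag_real A_herm)).
case: (boolP [exists i, (b < d 0 i ^+ 2) && ((v *m P^t*) 0 i != 0)]).
  move=> /existsP[i /andP[b_lt ci_neq0]] _; exists (d 0 i), (row i P).
  by rewrite dotmx_spectral_row hermitian_spectral_eigenvector.
rewrite negb_exists => /forallP small; rewrite real_ltNge ?ler_sum //.
  2,3: by apply: rpred_sum => i _; rewrite rpredM ?rpredX ?normr_real.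
move=> i _; have := small i; rewrite negb_and negbK.
case/orP => [d_small | /eqP->]; last by rewrite normr0 expr0n /= !mul0r mulr0.
by rewrite mulrC ler_wpM2r ?exprn_ge0 ?normr_ge0 // real_leNgt ?realX.
Qed.

End HermitianSpectral.

Section Graph.
Variables (n : nat) (e : rel 'I_n).

Lemma walk_le_leq m m' x y : (m <= m')%N -> walk_le e m x y -> walk_le e m' x y.
Proof.
by move=> le_mm' [p [ep lp sp]]; exists p; split=> //; apply: leq_trans le_mm'.
Qed.

Lemma walk_le2_neq x y : ~ walk_le e 2 x y -> x != y.
Proof. by apply: contra_notN => /eqP <-; exists [::]. Qed.

Lemma walk_le2_no_common_neighbour x y : symmetric e -> ~ walk_le e 2 x y ->
  forall l, ~~ (e x l && e y l).
Proof.
move=> e_sym far l; apply/negP => /andP[exl eyl]; apply: far.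
by exists [:: l; y]; rewrite /= exl e_sym eyl.
Qed.

Lemma map_adjmx (R S : nzRingType) (f : {rmorphism R -> S}) :
  adjmx e R ^ f = adjmx e S.
Proof. by apply/matrixP => i j; rewrite !mxE rmorph_nat. Qed.

Lemma adjmx_hermsym (C : numClosedFieldType) : symmetric e ->
  adjmx e C \is hermsymmx.
Proof.
move=> e_sym; apply: realsym_hermsym; last first.
  by apply/mxOverP => i j; rewrite mxE realn.
by apply/is_hermitianmxP; apply/matrixP => i j; rewrite !mxE e_sym mul1r.
Qed.

End Graph.

Section RegularGraph.
Variables (n : nat) (e : rel 'I_n) (k : nat).
Hypotheses (e_sym : symmetric e) (e_reg : regular_graph e k).

Lemma regular_sum_adj (R : nzRingType) x : \sum_l ((e x l)%:R : R) = k%:R.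
Proof.
rewrite -natr_sum; congr _%:R.
rewrite -(e_reg x) -sum1_card [RHS]big_mkcond /=.
by apply: eq_bigr => l _; rewrite inE; case: (e x l).
Qed.

Lemma mul_adjmx_sum (R : nzRingType) (u : 'rV[R]_n) j :
  (u *m adjmx e R) 0 j = \sum_(l | e j l) u 0 l.
Proof.
rewrite mxE [RHS]big_mkcond /=; apply: eq_bigr => l _.
by rewrite mxE e_sym; case: (e j l); rewrite ?mulr1 ?mulr0.
Qed.

Lemma dotmx_adj_delta_diff (C : numClosedFieldType) x y :
  (forall l, ~~ (e x l && e y l)) ->
  dotmx (('e_x - 'e_y) *m adjmx e C) (('e_x - 'e_y) *m adjmx e C) = (2 * k)%:R.
Proof.
move=> no_common; rewrite mulmxBl -!rowE dotmxE mxE.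
rewrite (eq_bigr (fun j => (e x j)%:R + (e y j)%:R)) => [|j _].
  by rewrite big_split /= !regular_sum_adj -natrD mul2n -addnn.
rewrite !mxE; have := no_common j.
by case: (e x j); case: (e y j) => //= _;
  rewrite ?subr0 ?sub0r ?subrr ?rmorphN ?rmorph1 ?conjC0;
  rewrite ?mulrNN ?mulr0 ?mulr1 ?addr0 ?add0r.
Qed.

Hypothesis e_conn : connected_graph e.

(* Maximum principle: the average of the neighbours of a maximum is maximal
   only if all the neighbours are maxima; connectivity spreads this. *)
Lemma regular_harmonic_const (R : realFieldType) (w : 'I_n -> R) :
  (forall j, \sum_(l | e j l) w l = k%:R * w j) -> forall x y, w x = w y.
Proof.
move=> w_harm x y; pose z := [arg max_(i > x) w i]%O.
have w_le j : w j <= w z.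
  by rewrite /z; case: Order.TotalTheory.arg_maxP => // i _; apply.
have max_nbr a b : e a b -> w a = w z -> w b = w z.
  move=> eab wa; have gap_ge0 l : 0 <= w z - w l by rewrite subr_ge0.
  have gap_sum : \sum_(l | e a l) (w z - w l) = 0.
    rewrite sumrB w_harm wa (eq_bigl (mem [set l | e a l])) => [|l]; last first.
      by rewrite !inE.
    by rewrite sumr_const e_reg mulr_natl subrr.
  move/eqP: (psumr_eq0P (fun l _ => gap_ge0 l) gap_sum eab).
  by rewrite subr_eq0 => /eqP.
have z_closed : closed e [pred j | w j == w z].
  move=> a b eab; rewrite !inE; apply/eqP/eqP; first exact: max_nbr.
  by apply: max_nbr; rewrite e_sym.
have w_z j : w j = w z.
  by have := closed_connect z_closed (e_conn z j); rewrite !inE eqxx => /esym/eqP.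
by rewrite !w_z.
Qed.

Lemma adjmx_eigen_regular_const (R : rcfType) (u : 'rV[R[i]]_n) :
  u *m adjmx e R[i] = k%:R *: u -> forall x y, u 0 x = u 0 y.
Proof.
move=> u_eig; have harm j : \sum_(l | e j l) u 0 l = k%:R * u 0 j.
  by rewrite -mul_adjmx_sum u_eig mxE.
have k_real : (k%:R : R[i]) = (k%:R : R)%:C%C by rewrite rmorph_nat.
have Re_harm j : \sum_(l | e j l) complex.Re (u 0 l) = k%:R * complex.Re (u 0 j).
  rewrite -(raddf_sum (@complex.Re R : Rcomplex R -> R)) harm k_real.
  by case: (u 0 j) => a b /=; rewrite mul0r subr0.
have Im_harm j : \sum_(l | e j l) complex.Im (u 0 l) = k%:R * complex.Im (u 0 j).
  rewrite -(raddf_sum (@complex.Im R : Rcomplex R -> R)) harm k_real.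
  by case: (u 0 j) => a b /=; rewrite mul0r addr0.
move=> x y; have := regular_harmonic_const Re_harm x y.
have := regular_harmonic_const Im_harm x y.
by case: (u 0 x) => a b; case: (u 0 y) => a' b' /= -> ->.
Qed.

End RegularGraph.

Theorem lemma3p1 (R : realType) (n : nat) (e : rel 'I_n) (k D : nat) :
  simple_graph e -> connected_graph e -> regular_graph e k -> (2 <= k)%N ->
  has_diameter e D -> (3 <= D)%N ->
  exists theta : R,
    [/\ eigenvalue (@adjmx n e R) theta, theta != k%:R &
        Num.sqrt (k%:R / 2) < `|theta| ].
Proof.
move=> [_ e_sym] e_conn e_reg k_ge2 [_ [x [y far]]] D_ge3.
have far2 : ~ walk_le e 2 x y.
  by move=> walk2; apply/far/(walk_le_leq _ walk2); clear far; case: D D_ge3.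
pose A := adjmx e R[i]; pose v : 'rV[R[i]]_n := 'e_x - 'e_y.
pose b : R[i] := (k%:R / 2)%:C%C.
have b_real : b \is Num.real by apply/complex_realP; exists (k%:R / 2).
have Av_large : b * dotmx v v < dotmx (v *m A) (v *m A).
  rewrite dotmx_delta_diff ?(walk_le2_neq far2) // (dotmx_adj_delta_diff e_reg).
    rewrite -(rmorph_nat (real_complex R)) -rmorphM divfK ?pnatr_eq0 // rmorph_nat.
    by rewrite ltr_nat mul2n -addnn -{1}[k]addn0 ltn_add2l ltnW.
  exact: walk_le2_no_common_neighbour.
have [theta [u [theta_real u_eig b_lt v_u]]] :=
  hermitian_large_eigenvector (adjmx_hermsym _ e_sym) b_real Av_large.
have theta_E : theta = (complex.Re theta)%:C%C by rewrite RRe_real.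
exists (complex.Re theta); split.
- rewrite -(eigenvalue_map (real_complex R)) map_adjmx.
  suff : eigenvalue A theta by rewrite {1}theta_E.
  apply/eigenvalueP; exists u => //; apply: contraNneq v_u => ->.
  by rewrite dotmxE trmx0 map_mx0 mulmx0 mxE.
- apply: contraNneq v_u => theta_k.
  have u_k : u *m A = k%:R *: u by rewrite u_eig theta_E theta_k rmorph_nat.
  have u_const := adjmx_eigen_regular_const e_sym e_reg e_conn u_k.
  by rewrite /v linearBl /= !dotmx_delta (u_const x y) subrr.
- rewrite theta_E -rmorphXn ltcR in b_lt.
  by rewrite -sqrtr_sqr ltr_sqrt ?(le_lt_trans _ b_lt) // divr_ge0 ?ler0n.
Qed.
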